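(* Let $\mathrm{dist}$ be a weak semantic distance metric for CQs. Then $\preceq^{\mathrm{dist}}$ is a proximity pre-order.
   Context: CQs are conjunctive queries $q(x_1,\dots,x_k)\text{ :- }\alpha_1,\dots,\alpha_n$ (relational atoms without constants, each answer variable in some atom); $q_1\equiv q_2$ means the queries return the same answers on every database instance. A weak semantic distance metric for CQs is a function $\mathrm{dist}$ from pairs of CQs of the same arity to non-negative reals such that $\mathrm{dist}(q_1,q_2)=\mathrm{dist}(q_2,q_1)$, $\mathrm{dist}(q_1,q_2)=0$ whenever $q_1\equiv q_2$, and $\mathrm{dist}(q_1,q_2)\le\mathrm{dist}(q_1,q_3)+\mathrm{dist}(q_3,q_2)$. The induced order: $q'\preceq^{\mathrm{dist}}_q q''$ iff $\mathrm{dist}(q,q')\le\mathrm{dist}(q,q'')$. A proximity pre-order is a family of pre-orders $\preceq_q$ on CQs, one for each CQ $q$, satisfying conservativeness ($q\preceq_q q'$ for all CQs $q,q'$) and syntax independence (whenever $q_1'\equiv q_1$, $q_2'\equiv q_2$, $q_3'\equiv q_3$, then $q_1\preceq_{q_2}q_3$ iff $q_1'\preceq_{q_2'}q_3'$). *)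

From Stdlib Require Import Reals List.
Import ListNotations.
Open Scope R_scope.

Set Implicit Arguments.

Section CQs.
Variable Rel : Type.
Variable ar : Rel -> nat.

(* Variables are natural numbers; an atom is a relation symbol applied to a
   list of variables (no constants). *)
Record atom := Atom { atom_rel : Rel; atom_args : list nat }.

Definition atom_wf (a : atom) : Prop := length (atom_args a) = ar (atom_rel a).

Record rawCQ := RawCQ { cq_head : list nat; cq_body : list atom }.

Definition cq_wf (k : nat) (q : rawCQ) : Prop :=
  length (cq_head q) = k /\
  (forall a, In a (cq_body q) -> atom_wf a) /\
  (forall x, In x (cq_head q) ->
     exists a, In a (cq_body q) /\ In x (atom_args a)).

Definition CQ (k : nat) : Type := { q : rawCQ | cq_wf k q }.

(* Database instances: finite relations over the (countably infinite)
   domain of constants nat. *)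
Definition instance : Type := Rel -> list (list nat).

Definition answer (q : rawCQ) (I : instance) (t : list nat) : Prop :=
  exists h : nat -> nat,
    map h (cq_head q) = t /\
    forall a, In a (cq_body q) -> In (map h (atom_args a)) (I (atom_rel a)).

Definition cq_equiv (k : nat) (q1 q2 : CQ k) : Prop :=
  forall (I : instance) (t : list nat),
    answer (proj1_sig q1) I t <-> answer (proj1_sig q2) I t.

Definition weak_semantic_distance_metric
    (dist : forall k, CQ k -> CQ k -> R) : Prop :=
  forall k,
    (forall q1 q2 : CQ k, 0 <= dist k q1 q2) /\
    (forall q1 q2 : CQ k, dist k q1 q2 = dist k q2 q1) /\
    (forall q1 q2 : CQ k, cq_equiv q1 q2 -> dist k q1 q2 = 0) /\
    (forall q1 q2 q3 : CQ k, dist k q1 q2 <= dist k q1 q3 + dist k q3 q2).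

(* Induced order: dist_order dist k q q' q'' means q' <=^dist_q q''. *)
Definition dist_order (dist : forall k, CQ k -> CQ k -> R)
    (k : nat) (q q' q'' : CQ k) : Prop :=
  dist k q q' <= dist k q q''.

(* A family of relations: ord k q x y means x <=_q y. *)
Definition proximity_preorder
    (ord : forall k, CQ k -> CQ k -> CQ k -> Prop) : Prop :=
  forall k,
    (forall q x, ord k q x x) /\
    (forall q x y z, ord k q x y -> ord k q y z -> ord k q x z) /\
    (* conservativeness *)
    (forall q q' : CQ k, ord k q q q') /\
    (* syntax independence *)
    (forall q1 q2 q3 q1' q2' q3' : CQ k,
       cq_equiv q1' q1 -> cq_equiv q2' q2 -> cq_equiv q3' q3 ->
       (ord k q2 q1 q3 <-> ord k q2' q1' q3')).

End CQs.

(* Because dist vanishes on equivalent queries, the triangle inequality makes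
   dist(q, q') invariant under replacing either argument by an equivalent
   query, which is syntax independence.  Conservativeness is
   dist(q, q) = 0 <= dist(q, q'), and reflexivity and transitivity are those
   of <= on the reals. *)

From Stdlib Require Import Reals Lra.

Section PseudoDistance.

Variables (T : Type) (eqv : T -> T -> Prop) (d : T -> T -> R).

Hypothesis d_sym : forall x y, d x y = d y x.
Hypothesis d_eqv : forall x y, eqv x y -> d x y = 0.
Hypothesis d_triangle : forall x y z, d x y <= d x z + d z y.

Lemma dist_eqv_l x x' y : eqv x x' -> d x y = d x' y.
Proof.
  intros E.
  pose proof (d_eqv _ _ E). pose proof (d_sym x x').
  pose proof (d_triangle x y x'). pose proof (d_triangle x' y x).
  lra.
Qed.

Lemma dist_eqv x x' y y' : eqv x x' -> eqv y y' -> d x y = d x' y'.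
Proof.
  intros Ex Ey.
  rewrite (dist_eqv_l _ _ y Ex), (d_sym x' y), (dist_eqv_l _ _ x' Ey).
  apply d_sym.
Qed.

Hypothesis eqv_refl : forall x, eqv x x.

Lemma dist_self x : d x x = 0.
Proof. exact (d_eqv _ _ (eqv_refl x)). Qed.

Lemma dist_ge0 x y : 0 <= d x y.
Proof.
  pose proof (d_triangle x x y). rewrite dist_self, (d_sym y x) in *. lra.
Qed.

End PseudoDistance.

Arguments dist_eqv {T eqv d} d_sym d_eqv d_triangle {x x' y y'}.

Lemma cq_equiv_refl (Rel : Type) (ar : Rel -> nat) (k : nat) (q : CQ ar k) :
  cq_equiv q q.
Proof. intros I t. reflexivity. Qed.

Theorem proposition29 (Rel : Type) (ar : Rel -> nat)
  (dist : forall k, CQ ar k -> CQ ar k -> R) :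
  weak_semantic_distance_metric dist ->
  proximity_preorder (dist_order dist).
Proof.
  intros Hdist k. destruct (Hdist k) as [_ [d_sym [d_eqv d_triangle]]].
  pose proof (@cq_equiv_refl Rel ar k) as eqv_refl.
  unfold dist_order. split; [|split; [|split]].
  - intros q x. lra.
  - intros q x y z. lra.
  - intros q q'.
    rewrite (dist_self _ _ _ d_eqv eqv_refl).
    exact (dist_ge0 _ _ _ d_sym d_eqv d_triangle eqv_refl q q').
  - intros q1 q2 q3 q1' q2' q3' E1 E2 E3.
    rewrite (dist_eqv d_sym d_eqv d_triangle E2 E1),
            (dist_eqv d_sym d_eqv d_triangle E2 E3).
    reflexivity.
Qed.
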